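(* Let $d\ge 0$ be an integer and let $G$ be any finite $d$-regular graph. Then \[ \hom(G,H_{\mathrm{WR}}) \le \hom(K_{d+1},H_{\mathrm{WR}})^{|V(G)|/(d+1)}, \] with equality if and only if $G$ is a disjoint union of copies of $K_{d+1}$.
   Context: Graphs $G$ are finite, simple and have at least one vertex. $H_{\mathrm{WR}}$ is the graph with vertex set $\{0,1,2\}$, edges $\{1,0\}$ and $\{0,2\}$, and a loop at each of $0,1,2$. $\hom(G,H)$ is the number of graph homomorphisms from $G$ to $H$, i.e. maps $V(G)\to V(H)$ sending adjacent vertices to adjacent vertices (a vertex with a loop is adjacent to itself). $K_{d+1}$ denotes the complete graph on $d+1$ vertices. *)

From mathcomp Require Import all_boot.
Set Implicit Arguments. Unset Strict Implicit. Unset Printing Implicit Defensive.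

Definition simple_graph (V : finType) (e : rel V) : Prop :=
  symmetric e /\ irreflexive e.

Definition regular (V : finType) (e : rel V) (d : nat) : Prop :=
  forall x : V, #|[set y | e x y]| = d.

Definition hom (V W : finType) (e : rel V) (h : rel W) : nat :=
  #|[set f : {ffun V -> W} | [forall x, forall y, e x y ==> h (f x) (f y)]]|.

(* H_WR on {0,1,2}: edges {1,0}, {0,2}, and a loop at each vertex. *)
Definition HWR_adj : rel 'I_3 := fun i j =>
  [|| i == j,
      (val i == 0) && (val j == 1), (val i == 1) && (val j == 0),
      (val i == 0) && (val j == 2) | (val i == 2) && (val j == 0)].

Definition K_adj (n : nat) : rel 'I_n := fun i j => i != j.
Arguments K_adj n : clear implicits.

Definition disjoint_union_of_cliques (V : finType) (e : rel V) (n : nat) : Prop :=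
  exists P : {set {set V}},
    [/\ partition P [set: V],
        (forall B, B \in P -> #|B| = n) &
        (forall x y, e x y = (x != y) && (pblock P x == pblock P y))].

(* A homomorphism into H_WR is determined by the set B of vertices sent to 2:
   the other vertices go to 0, or to 1 when their closed neighbourhood misses
   B.  Hence hom(G, H_WR) = sum_B prod_x w(B :&: N[x]) with w(set0) = 2 and
   w = 1 otherwise.  In a d-regular graph the closed neighbourhoods cover
   every vertex exactly d+1 times, so Finner's generalized Hoelder inequality
   (proved by eliminating one vertex at a time with the two-term Hoelder
   inequality) bounds the (d+1)-th power of that sum by
   prod_x sum_(C \subset N[x]) w(C)^(d+1) = hom(K_(d+1), H_WR)^|V|.
   If an edge iy has N[y] not contained in N[i], the elimination step at i is
   strict; otherwise the closed neighbourhoods partition V into cliques, where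
   the sum factorizes and equality holds. *)

From mathcomp Require Import all_boot order ssralg ssrnum algC.

Set Implicit Arguments.
Unset Strict Implicit.
Unset Printing Implicit Defensive.

Import Order.TTheory GRing.Theory Num.Theory.

Section SubsetSums.
Variables (T : finType) (R : nmodType).
Local Open Scope ring_scope.

Lemma sum_subset_setU (X Y : {set T}) (F : {set T} -> R) : [disjoint X & Y] ->
  \sum_(B : {set T} | B \subset X :|: Y) F B =
  \sum_(C : {set T} | C \subset X) \sum_(D : {set T} | D \subset Y) F (C :|: D).
Proof.
move=> dXY; rewrite pair_big_dep /=.
rewrite (reindex_onto (fun p : {set T} * {set T} => p.1 :|: p.2)
  (fun B => (B :&: X, B :&: Y))) /=; last first.
  by move=> B sB; rewrite -setIUr; apply/setIidPl.
apply: eq_bigl => -[C D] /=; apply/idP/idP.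
  by case/andP=> _ /eqP[<- <-]; rewrite !subsetIr.
case/andP=> sCX sDY; rewrite setUSS //= xpair_eqE !setIUl.
have /setIidPl-> := sCX; have /setIidPl-> := sDY.
have /eqP-> : D :&: X == set0.
  by rewrite setI_eq0 (disjointWl sDY) // disjoint_sym.
have /eqP-> : C :&: Y == set0 by rewrite setI_eq0 (disjointWl sCX).
by rewrite setU0 set0U !eqxx.
Qed.

Lemma sum_subset_setU1 (A : {set T}) i (F : {set T} -> R) : i \notin A ->
  \sum_(B : {set T} | B \subset i |: A) F B =
  \sum_(B : {set T} | B \subset A) (F B + F (i |: B)).
Proof.
move=> iA; rewrite setUC sum_subset_setU 1?disjoint_sym ?disjoints1 //.
apply: eq_bigr => B _; rewrite (bigD1 set0) ?sub0set //= setU0.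
rewrite (big_pred1 [set i]) => [|D]; first by rewrite setUC.
rewrite /= subset1.
by case: eqP => [->|_] /=; [apply/set0Pn; exists i; rewrite inE | rewrite andbN].
Qed.
End SubsetSums.

Section TwoTermHolder.
Variables (C : numClosedFieldType) (J : finType) (A : {pred J}) (n : nat).
Hypotheses (n_gt0 : (0 < n)%N) (cardA : #|A| = n).
Local Open Scope ring_scope.

Lemma leif_prod_mean_pow (u : J -> C) : {in A, forall j, 0 <= u j} ->
  \prod_(j in A) u j <= (\sum_(j in A) u j ^+ n) / n%:R
    ?= iff [forall i in A, forall j in A, u i ^+ n == u j ^+ n].
Proof.
move=> u_ge0; have := @leif_rootC_AGM C J A (fun j => u j ^+ n).
by rewrite cardA prodrXl exprCK ?prodr_ge0 //; apply => j /u_ge0/exprn_ge0.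
Qed.

Variables (a b : J -> C).
Hypotheses (a_ge0 : forall j, 0 <= a j) (b_ge0 : forall j, 0 <= b j).
Let r j := n.-root (a j ^+ n + b j ^+ n).

Let r_ge0 j : 0 <= r j.
Proof. by rewrite rootC_ge0 // addr_ge0 ?exprn_ge0. Qed.

Let rK j : r j ^+ n = a j ^+ n + b j ^+ n.
Proof. exact: rootCK. Qed.

Lemma leif_holder2 : {in A, forall j, 0 < r j} ->
  \prod_(j in A) a j + \prod_(j in A) b j <= \prod_(j in A) r j
    ?= iff [forall i in A, forall j in A, (a i / r i) ^+ n == (a j / r j) ^+ n]
        && [forall i in A, forall j in A, (b i / r i) ^+ n == (b j / r j) ^+ n].
Proof.
move=> r_gt0; have r_neq0 j : j \in A -> r j != 0 by move/r_gt0; rewrite lt0r => /andP[].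
have -> : \prod_(j in A) a j + \prod_(j in A) b j =
    (\prod_(j in A) (a j / r j) + \prod_(j in A) (b j / r j)) * \prod_(j in A) r j.
  rewrite mulrDl -!big_split; congr (_ + _);
    by apply: eq_bigr => j jA; rewrite /= divfK ?r_neq0.
rewrite -{2}[\prod_(j in A) r j]mul1r (mono_leif (ler_pM2r _)) ?prodr_gt0 //.
(* The normalized vectors have unit l^n norm, so their means sum to one. *)
have norm1 : (\sum_(j in A) (a j / r j) ^+ n) / n%:R
          + (\sum_(j in A) (b j / r j) ^+ n) / n%:R = 1.
  rewrite -mulrDl -big_split /= (eq_bigr (fun _ => 1)).
    by rewrite sumr_const cardA divff // pnatr_eq0 -lt0n.
  by move=> j jA; rewrite !expr_div_n -mulrDl -rK divff // expf_neq0 ?r_neq0.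
rewrite -[X in _ <= X ?= iff _]norm1.
by apply: leifD; apply: leif_prod_mean_pow => j _; rewrite divr_ge0.
Qed.

Lemma holder2 :
  \prod_(j in A) a j + \prod_(j in A) b j <= \prod_(j in A) r j.
Proof.
have [/existsP[j /andP[jA /eqP rj0]]|] := boolP [exists j in A, r j == 0].
  have : a j ^+ n + b j ^+ n == 0 by rewrite -rK rj0 expr0n gtn_eqF.
  rewrite paddr_eq0 ?exprn_ge0 // !expf_eq0 n_gt0 => /andP[/eqP aj0 /eqP bj0].
  by rewrite (bigD1 j jA) [X in _ + X](bigD1 j jA) /= aj0 bj0 !mul0r addr0; apply: prodr_ge0.
rewrite negb_exists => /forallP r_neq0.
apply: (leif_holder2 _).1 => j jA; rewrite lt0r r_ge0 andbT.
by have := r_neq0 j; rewrite jA.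
Qed.

Lemma holder2_lt j k : {in A, forall i, 0 < a i} ->
  j \in A -> k \in A -> a j * b k != a k * b j ->
  \prod_(j in A) a j + \prod_(j in A) b j < \prod_(j in A) r j.
Proof.
move=> a_gt0 jA kA not_prop.
have s_gt0 i : i \in A -> 0 < a i ^+ n + b i ^+ n.
  by move/a_gt0=> ai_gt0; rewrite ltr_pwDl ?exprn_gt0 ?exprn_ge0.
rewrite (lt_leif (leif_holder2 _)) => [|i /s_gt0]; last by rewrite rootC_gt0.
apply: contra not_prop => /andP[/forall_inP/(_ j jA)/forall_inP/(_ k kA) + _].
rewrite !expr_div_n !rK eqr_div ?(gt_eqF (s_gt0 _ _)) // => /eqP.
rewrite !mulrDr [a k ^+ n * _]mulrC => /addrI eq_pow.
by rewrite -(eqrXn2 n_gt0) ?mulr_ge0 ?a_ge0 ?b_ge0 // !exprMn eq_pow mulrC.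
Qed.
End TwoTermHolder.

Section Finner.
Variables (C : numClosedFieldType) (I X : finType) (n : nat).
Hypothesis n_gt0 : (0 < n)%N.
Local Open Scope ring_scope.
Implicit Types (D B : {set I}) (S : X -> {set I}) (f : X -> {set I} -> C).

(* Subsets [B] of [D] encode the points of the cube {0,1}^D, and [B :&: S x]
   the projection of [B] on the coordinates in [S x]. *)
Definition sum_prod_restr D S f :=
  \sum_(B : {set I} | B \subset D) \prod_x f x (B :&: S x).

Definition prod_sum_pow S f :=
  \prod_x \sum_(B : {set I} | B \subset S x) f x B ^+ n.

(* Eliminating the coordinate [i]: each [f x] whose support [S x] contains [i]
   is replaced by its l^n norm in that coordinate. *)
Definition contract i S f x B :=
  if i \in S x then n.-root (f x B ^+ n + f x (i |: B) ^+ n) else f x B.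

Lemma contract_ge0 i S f : (forall x B, 0 <= f x B) ->
  forall x B, 0 <= contract i S f x B.
Proof.
move=> f_ge0 x B; rewrite /contract; case: ifP => // _.
by rewrite rootC_ge0 // addr_ge0 ?exprn_ge0.
Qed.

Lemma prod_sum_pow_contract i S f :
  prod_sum_pow S f = prod_sum_pow (fun x => S x :\ i) (contract i S f).
Proof.
apply: eq_bigr => x _; rewrite /contract; have [iSx | iSx] := boolP (i \in S x).
  rewrite -{1}(setD1K iSx) sum_subset_setU1 ?setD11 //.
  by apply: eq_bigr => B _; rewrite rootCK.
by rewrite (setDidPl _) // disjoint_sym disjoints1.
Qed.

Lemma sum_prod_restr_setD1 D S f i : i \in D ->
  sum_prod_restr D S f = \sum_(B : {set I} | B \subset D :\ i)
    (\prod_x f x (B :&: S x) + \prod_x f x ((i |: B) :&: S x)).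
Proof. by move=> iD; rewrite /sum_prod_restr -{1}(setD1K iD) sum_subset_setU1 ?setD11. Qed.

Section ContractTerm.
Variables (S : X -> {set I}) (f : X -> {set I} -> C) (i : I) (B : {set I}).
Hypothesis iB : i \notin B.

Lemma prod_restr_setU1 :
  \prod_x f x (B :&: S x) + \prod_x f x ((i |: B) :&: S x) =
  (\prod_(x | i \in S x) f x (B :&: S x) + \prod_(x | i \in S x) f x (i |: (B :&: S x)))
    * \prod_(x | i \notin S x) f x (B :&: S x).
Proof.
rewrite mulrDl !(bigID (fun x => i \in S x) predT) /=; congr (_ + _ * _).
  by apply: eq_bigr => x iSx; rewrite setIUl (setIidPl _) // sub1set.
apply: eq_bigr => x /negPf iSx; congr (f x _); apply/setP => z; rewrite !inE.
by case: (z =P i) => [->|_] /=; rewrite ?iSx ?andbF.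
Qed.

Lemma prod_restr_contract :
  \prod_x contract i S f x (B :&: (S x :\ i)) =
  \prod_(x | i \in S x) n.-root (f x (B :&: S x) ^+ n + f x (i |: (B :&: S x)) ^+ n)
    * \prod_(x | i \notin S x) f x (B :&: S x).
Proof.
have BSi x : B :&: (S x :\ i) = B :&: S x.
  by rewrite setIDA (setDidPl _) // disjoint_sym disjoints1 inE (negPf iB).
rewrite (bigID (fun x => i \in S x)) /=.
by congr (_ * _); apply: eq_bigr => x iSx; rewrite /contract BSi ?(negPf iSx) ?iSx.
Qed.
End ContractTerm.

Lemma contract_term_le S f i B : i \notin B -> #|[set x | i \in S x]| = n ->
    (forall x B, 0 <= f x B) ->
  \prod_x f x (B :&: S x) + \prod_x f x ((i |: B) :&: S x) <=
  \prod_x contract i S f x (B :&: (S x :\ i)).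
Proof.
move=> iB cover_i f_ge0; rewrite prod_restr_setU1 // prod_restr_contract //.
rewrite ler_wpM2r ?prodr_ge0 //.
by apply: (holder2 (A := [pred x | i \in S x])) => //; rewrite -cover_i cardsE.
Qed.

Lemma contract_term_lt S f i B j k : i \notin B -> #|[set x | i \in S x]| = n ->
    (forall x B, 0 < f x B) -> i \in S j -> i \in S k ->
    f j (B :&: S j) * f k (i |: (B :&: S k)) != f k (B :&: S k) * f j (i |: (B :&: S j)) ->
  \prod_x f x (B :&: S x) + \prod_x f x ((i |: B) :&: S x) <
  \prod_x contract i S f x (B :&: (S x :\ i)).
Proof.
move=> iB cover_i f_gt0 iSj iSk not_prop.
rewrite prod_restr_setU1 // prod_restr_contract // ltr_pM2r ?prodr_gt0 //.
have f_ge0 x B' : 0 <= f x B' by apply: ltW.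
apply: (holder2_lt n_gt0 _ (fun x => f_ge0 x _) (fun x => f_ge0 x _) _ iSj iSk not_prop).
  by rewrite -cover_i cardsE.
by move=> x _.
Qed.

Definition regular_cover D S :=
  (forall x, S x \subset D) /\ {in D, forall j, #|[set x | j \in S x]| = n}.

Lemma regular_cover_setD1 D S i :
  regular_cover D S -> regular_cover (D :\ i) (fun x => S x :\ i).
Proof.
case=> sSD cover; split=> [x | j]; first exact: setSD.
rewrite !inE => /andP[ji jD]; rewrite -(cover j jD).
by apply: eq_card => x; rewrite !inE ji.
Qed.

Lemma sum_prod_restr_ge0 D S f : (forall x B, 0 <= f x B) -> 0 <= sum_prod_restr D S f.
Proof. by move=> f_ge0; apply: sumr_ge0 => B _; apply: prodr_ge0. Qed.

Lemma sum_prod_restr_contract_le D S f i : i \in D -> #|[set x | i \in S x]| = n ->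
    (forall x B, 0 <= f x B) ->
  sum_prod_restr D S f <= sum_prod_restr (D :\ i) (fun x => S x :\ i) (contract i S f).
Proof.
move=> iD cover_i f_ge0; rewrite (sum_prod_restr_setD1 _ _ iD); apply: ler_sum => B.
by case/subsetD1P=> _ iB; apply: contract_term_le.
Qed.

Theorem finner D S f : regular_cover D S -> (forall x B, 0 <= f x B) ->
  sum_prod_restr D S f ^+ n <= prod_sum_pow S f.
Proof.
have [k] := ubnP #|D|; elim: k D S f => // k IH D S f cardD coverS f_ge0.
have [D0 | [i iD]] := set_0Vmem D.
  have S0 x : S x = set0 by apply/eqP; rewrite -subset0 -D0 coverS.1.
  rewrite /sum_prod_restr /prod_sum_pow D0 (big_pred1 set0) => [|B]; last first.
    by rewrite /= subset0.
  rewrite -prodrXl le_eqVlt; apply/predU1l/eq_bigr => x _.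
  by rewrite S0 set0I (big_pred1 set0) // => B; rewrite /= subset0.
have cardDi : (#|D :\ i| < k)%N by move: cardD; rewrite (cardsD1 i D) iD add1n ltnS.
have := IH _ _ _ cardDi (regular_cover_setD1 i coverS) (contract_ge0 i S f_ge0).
rewrite -prod_sum_pow_contract; apply: le_trans.
rewrite ler_pXn2r // ?nnegrE ?sum_prod_restr_ge0 //; last exact: contract_ge0.
by apply: sum_prod_restr_contract_le => //; apply: coverS.2.
Qed.

Lemma finner_lt D S f i B j k : regular_cover D S -> (forall x B, 0 < f x B) ->
    i \in D -> B \subset D :\ i -> i \in S j -> i \in S k ->
    f j (B :&: S j) * f k (i |: (B :&: S k)) != f k (B :&: S k) * f j (i |: (B :&: S j)) ->
  sum_prod_restr D S f ^+ n < prod_sum_pow S f.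
Proof.
move=> coverS f_gt0 iD sBD iSj iSk not_prop.
have f_ge0 x B' : 0 <= f x B' by apply: ltW.
have cover_i := coverS.2 i iD.
have /subsetD1P[_ iB] := sBD.
have := finner (regular_cover_setD1 i coverS) (contract_ge0 i S f_ge0).
rewrite -prod_sum_pow_contract; apply: lt_le_trans.
rewrite ltr_pXn2r // ?nnegrE ?sum_prod_restr_ge0 //; last exact: contract_ge0.
rewrite (sum_prod_restr_setD1 _ _ iD) /sum_prod_restr !(bigD1 B sBD) /=.
apply: ltr_leD; first exact: (contract_term_lt iB cover_i f_gt0 iSj iSk not_prop).
by apply: ler_sum => B' /andP[/subsetD1P[_ iB'] _]; apply: contract_term_le.
Qed.
End Finner.

Section TrivIsetFactor.
Variables (T : finType) (R : comPzSemiRingType).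
Local Open Scope ring_scope.

Lemma sum_prod_trivIset (Q : {set {set T}}) (h : {set T} -> {set T} -> R) :
    trivIset Q ->
  \sum_(B : {set T} | B \subset cover Q) \prod_(b in Q) h b (B :&: b) =
  \prod_(b in Q) \sum_(C : {set T} | C \subset b) h b C.
Proof.
have [k] := ubnP #|Q|; elim: k Q => // k IH Q cardQ trivQ.
have [-> | [b0 b0Q]] := set_0Vmem Q.
  rewrite /cover !big_set0 (big_pred1 set0) ?big_set0 // => B.
  by rewrite /= subset0.
set Q' := Q :\ b0.
have trivQ' : trivIset Q' by apply: trivIsetS trivQ; apply: subsetDl.
have dis_b0 b : b \in Q' -> [disjoint b0 & b].
  by case/setD1P=> bb0 bQ; apply: (trivIsetP trivQ); rewrite // eq_sym.
have dis_cover : [disjoint b0 & cover Q'] by apply: bigcup_disjoint.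
have -> : cover Q = b0 :|: cover Q'.
  by rewrite /cover -{1}(setD1K b0Q) big_setU1 //= setD11.
rewrite sum_subset_setU // (big_setD1 b0 b0Q) /=.
rewrite -IH //; last by move: cardQ; rewrite (cardsD1 b0) b0Q add1n ltnS.
rewrite big_distrl /=; apply: eq_bigr => C sCb0.
rewrite big_distrr /=; apply: eq_bigr => D sDQ'.
rewrite (big_setD1 b0 b0Q) /=.
congr (h b0 _ * _).
  rewrite setIUl (setIidPl sCb0) (_ : D :&: b0 = set0) ?setU0 //.
  by apply/eqP; rewrite setI_eq0 disjoint_sym (disjointWr sDQ').
apply: eq_bigr => b bQ'; rewrite setIUl (_ : C :&: b = set0) ?set0U //.
by apply/eqP; rewrite setI_eq0 (disjointWl sCb0) ?dis_b0.
Qed.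
End TrivIsetFactor.

Definition cnbhd (V : finType) (e : rel V) (x : V) : {set V} := x |: [set y | e x y].

Definition wr_weight (T : finType) (B : {set T}) : nat := if B == set0 then 2 else 1.

Lemma wr_weight_mem (T : finType) (B : {set T}) x : x \in B -> wr_weight B = 1.
Proof. by rewrite /wr_weight; case: eqP => // ->; rewrite inE. Qed.

Lemma HWR_adjE (c c' : 'I_3) : HWR_adj c c' =
  ~~ [|| ((c : nat) == 1) && ((c' : nat) == 2) | ((c : nat) == 2) && ((c' : nat) == 1)].
Proof. by case: c => [[|[|[|]]] ?] //; case: c' => [[|[|[|]]] ?]. Qed.

Section HomFibers.
Variables (V : finType) (e : rel V).
Hypothesis sym_e : symmetric e.

(* A homomorphism [f] with [f^-1(2) = B] sends the vertices of [B] to [2] and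
   any other vertex [x] to [0], or to [1] when no vertex of its closed
   neighbourhood lies in [B]. *)
Definition wr_choice (B : {set V}) (x : V) : pred 'I_3 :=
  [pred c : 'I_3 | (((c : nat) == 2) == (x \in B))
            && (((c : nat) == 1) ==> (B :&: cnbhd e x == set0))].

Lemma card_wr_choice B x : #|wr_choice B x| = wr_weight (B :&: cnbhd e x).
Proof.
rewrite -sum1_card big_mkcond !big_ord_recr big_ord0 !inE /= /wr_weight.
have [xB | xB] := boolP (x \in B); last by case: (_ == set0).
suff /negPf-> : B :&: cnbhd e x != set0 by [].
by apply/set0Pn; exists x; rewrite !inE xB eqxx.
Qed.

Lemma hom_fiberE B (f : {ffun V -> 'I_3}) :
  [forall x, forall y, e x y ==> HWR_adj (f x) (f y)]
    && ([set x | (f x : nat) == 2] == B) = (f \in family (wr_choice B)).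
Proof.
apply/andP/familyP => [[/forallP hom_f /eqP<-] x | choice_f].
  rewrite inE inE eqxx /=; apply/implyP => fx1; apply/eqP/setP => y.
  rewrite !inE; apply/negP => /andP[fy2 /predU1P[yx | exy]].
    by move: fx1; rewrite -yx (eqP fy2).
  by move/forallP/(_ y)/implyP/(_ exy): (hom_f x); rewrite HWR_adjE (eqP fx1) fy2.
have fiberB : [set x | (f x : nat) == 2] = B.
  by apply/setP => x; rewrite inE; have /andP[/eqP] := choice_f x.
split; last by rewrite fiberB.
apply/forallP => x; apply/forallP => y; apply/implyP => exy.
have no_12 z z' : e z z' -> (f z : nat) = 1 -> (f z' : nat) != 2.
  move=> ezz' fz1; have /andP[_ /implyP/(_ (introT eqP fz1))] := choice_f z.
  move/eqP/setP/(_ z'); rewrite !inE ezz' orbT andbT => /negbT.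
  by rewrite -fiberB inE.
rewrite HWR_adjE; apply/norP; split; apply/nandP.
  by case: (f x =P 1 :> nat) => [/(no_12 _ _ exy)|]; [right | left].
by case: (f y =P 1 :> nat) => [/(no_12 _ _ (etrans (sym_e y x) exy))|]; [left | right].
Qed.

Lemma hom_HWR_sum :
  hom e HWR_adj = \sum_(B : {set V}) \prod_x wr_weight (B :&: cnbhd e x).
Proof.
rewrite /hom -sum1_card (partition_big (fun f : {ffun V -> 'I_3} =>
  [set x | (f x : nat) == 2]) predT) //=.
apply: eq_bigr => B _; rewrite (eq_bigl (mem (family (wr_choice B)))) => [|f].
  rewrite sum1_card card_family foldrE big_map big_enum /=.
  by apply: eq_bigr => x _; rewrite card_wr_choice.
by rewrite inE hom_fiberE.
Qed.
End HomFibers.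

Lemma sum_wr_weight_pow (T : finType) (A : {set T}) k :
  \sum_(C : {set T} | C \subset A) wr_weight C ^ k = 2 ^ k + (2 ^ #|A| - 1).
Proof.
rewrite (bigD1 set0) ?sub0set //= {1}/wr_weight eqxx; congr (_ + _).
rewrite (eq_bigr (fun _ => 1)) => [|C /andP[_ /negPf C0]]; last by rewrite /wr_weight C0 exp1n.
rewrite sum1dep_card -card_powerset (cardsD1 set0 (powerset A)) powersetE sub0set.
rewrite add1n subn1 /=.
by apply: eq_card => C; rewrite !inE andbC.
Qed.

Lemma hom_complete_HWR n : hom (K_adj n) HWR_adj = 2 ^ n + (2 ^ n - 1).
Proof.
rewrite hom_HWR_sum => [|x y]; last by rewrite /K_adj eq_sym.
have cnbhdT x : cnbhd (K_adj n) x = setT.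
  by apply/setP => y; rewrite !inE /K_adj eq_sym orbN.
rewrite -[in 2 ^ n - 1](card_ord n) -cardsT -(sum_wr_weight_pow _ n).
apply: eq_big => [B | B _]; first by rewrite subsetT.
rewrite (eq_bigr (fun _ => wr_weight B)) => [|x _]; last by rewrite cnbhdT setIT.
by rewrite prod_nat_const card_ord.
Qed.

Section RegularGraph.
Variables (V : finType) (e : rel V) (d : nat).
Hypotheses (simple_e : simple_graph e) (regular_e : regular e d).
Local Open Scope ring_scope.

Let sym_e : symmetric e := simple_e.1.

Lemma cnbhd_id x : x \in cnbhd e x.
Proof. exact: setU11. Qed.

Lemma card_cnbhd x : #|cnbhd e x| = d.+1.
Proof. by rewrite cardsU1 inE simple_e.2 regular_e. Qed.

Lemma regular_cover_cnbhd : regular_cover d.+1 setT (cnbhd e).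
Proof.
split=> [x | j _]; first exact: subsetT.
by rewrite -(card_cnbhd j); apply: eq_card => x; rewrite !inE eq_sym sym_e.
Qed.

Let w (x : V) (B : {set V}) : algC := (wr_weight B)%:R.

Let w_gt0 x B : 0 < w x B.
Proof. by rewrite ltr0n /wr_weight; case: ifP. Qed.

Lemma hom_HWR_finner_sum : (hom e HWR_adj)%:R = sum_prod_restr setT (cnbhd e) w.
Proof.
rewrite hom_HWR_sum // natr_sum; apply: eq_big => [B | B _]; first by rewrite subsetT.
by rewrite natr_prod.
Qed.

Lemma prod_sum_pow_cnbhd :
  prod_sum_pow d.+1 (cnbhd e) w = (hom (K_adj d.+1) HWR_adj ^ #|V|)%:R.
Proof.
rewrite natrX -prodr_const; apply: eq_bigr => x _.
rewrite hom_complete_HWR -(card_cnbhd x) -sum_wr_weight_pow natr_sum.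
by apply: eq_bigr => B _; rewrite natrX.
Qed.

Lemma hom_HWR_pow_le : (hom e HWR_adj ^ d.+1 <= hom (K_adj d.+1) HWR_adj ^ #|V|)%N.
Proof.
rewrite -(ler_nat algC) natrX hom_HWR_finner_sum -prod_sum_pow_cnbhd.
by apply: (finner (ltn0Sn d) regular_cover_cnbhd) => x B; apply: ltW.
Qed.

Lemma hom_HWR_pow_lt i y u : e i y -> u \in cnbhd e y -> u \notin cnbhd e i ->
  (hom e HWR_adj ^ d.+1 < hom (K_adj d.+1) HWR_adj ^ #|V|)%N.
Proof.
move=> eiy uy ui.
rewrite -(ltr_nat algC) natrX hom_HWR_finner_sum -prod_sum_pow_cnbhd.
apply: (finner_lt (i := i) (B := [set u]) (j := i) (k := y) (ltn0Sn d)
  regular_cover_cnbhd w_gt0).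
- exact: in_setT.
- by rewrite sub1set !inE andbT; apply: contraNneq ui => ->; apply: cnbhd_id.
- exact: cnbhd_id.
- by rewrite !inE sym_e eiy orbT.
(* The Hoelder step at [i] is strict on the term [B = [set u]], where the
   weight of [i] is 2 and the three others are 1. *)
have ui0 : [set u] :&: cnbhd e i = set0 by apply/disjoint_setI0; rewrite disjoints1.
have uy0 : [set u] :&: cnbhd e y = [set u] by apply/setIidPl; rewrite sub1set.
rewrite /w ui0 uy0 !(wr_weight_mem (setU11 _ _)) (wr_weight_mem (set11 u)).
by rewrite /wr_weight eqxx -!natrM eqr_nat.
Qed.

Lemma disjoint_cliques_cnbhd :
    (forall i y, e i y -> cnbhd e y \subset cnbhd e i) ->
  disjoint_union_of_cliques e d.+1.
Proof.
move=> sub_cnbhd.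
have cnbhd_edge i y : e i y -> cnbhd e i = cnbhd e y.
  by move=> eiy; apply/eqP; rewrite eqEsubset !sub_cnbhd // sym_e.
have cnbhd_mem x z : z \in cnbhd e x -> cnbhd e z = cnbhd e x.
  by case/setU1P=> [-> // | ]; rewrite inE => /cnbhd_edge->.
pose P := [set cnbhd e x | x in [set: V]].
have trivP : trivIset P.
  apply/trivIsetP => _ _ /imsetP[x _ ->] /imsetP[y _ ->] neq.
  apply/pred0P => z /=; apply/negP => /andP[zx zy].
  by move: neq; rewrite -(cnbhd_mem _ _ zx) -(cnbhd_mem _ _ zy) eqxx.
have pblockE x : pblock P x = cnbhd e x.
  exact: def_pblock trivP (imset_f _ (in_setT x)) (cnbhd_id x).
exists P; split.
- rewrite /partition trivP /=; apply/andP; split.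
    apply/eqP/setP => x; rewrite in_setT; apply/bigcupP.
    by exists (cnbhd e x); [apply: imset_f | apply: cnbhd_id].
  by apply/imsetP => -[x _ /setP/(_ x)]; rewrite inE cnbhd_id.
- by move=> _ /imsetP[x _ ->]; apply: card_cnbhd.
move=> x y; rewrite !pblockE; apply/idP/andP => [exy | [xy /eqP Exy]].
  by split; [apply: contraTneq exy => ->; rewrite simple_e.2 | apply/eqP/cnbhd_edge].
by have := cnbhd_id y; rewrite -Exy !inE eq_sym (negPf xy).
Qed.
End RegularGraph.

Lemma hom_HWR_disjoint_cliques (V : finType) (e : rel V) n :
  disjoint_union_of_cliques e n -> hom e HWR_adj ^ n = hom (K_adj n) HWR_adj ^ #|V|.
Proof.
case=> P [partP cardP adjE]; have /and3P[/eqP coverP trivP _] := partP.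
have sym_e : symmetric e by move=> x y; rewrite !adjE eq_sym [pblock P x == _]eq_sym.
have cnbhdE x : cnbhd e x = pblock P x.
  have x_cover : x \in cover P by rewrite coverP in_setT.
  apply/setP => y; rewrite !inE adjE (eq_pblock _ trivP x_cover).
  by case: (y =P x) => [-> | /eqP yx] /=; rewrite ?mem_pblock // eq_sym yx.
have homP : hom e HWR_adj = hom (K_adj n) HWR_adj ^ #|P|.
  transitivity (\prod_(b in P) \sum_(C : {set V} | C \subset b) wr_weight C ^ n); last first.
    rewrite -prod_nat_const; apply: eq_bigr => b bP.
    by rewrite hom_complete_HWR sum_wr_weight_pow cardP.
  rewrite hom_HWR_sum // -sum_prod_trivIset // coverP.
  apply: eq_big => [B | B _]; first by rewrite subsetT.
  transitivity (\prod_(x in [set: V]) wr_weight (B :&: cnbhd e x)).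
    by apply: eq_bigl => x; rewrite in_setT.
  rewrite (set_partition_big _ partP); apply: eq_bigr => b bP.
  rewrite -(cardP b bP) -prod_nat_const; apply: eq_bigr => x xb.
  by rewrite cnbhdE (def_pblock trivP bP xb).
by rewrite homP -cardsT (card_uniform_partition cardP partP) -expnM mulnC.
Qed.

Theorem corollary2 (d : nat) (V : finType) (e : rel V) :
  simple_graph e -> 0 < #|V| -> regular e d ->
  (hom e HWR_adj) ^ d.+1 <= (hom (K_adj d.+1) HWR_adj) ^ #|V|
  /\ ((hom e HWR_adj) ^ d.+1 = (hom (K_adj d.+1) HWR_adj) ^ #|V|
      <-> disjoint_union_of_cliques e d.+1).
Proof.
move=> simple_e _ regular_e; split; first exact: hom_HWR_pow_le.
split=> [eq_hom | /hom_HWR_disjoint_cliques //].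
apply: disjoint_cliques_cnbhd => // i y eiy; apply/subsetP => u uy.
apply: contraT => ui; have := hom_HWR_pow_lt simple_e regular_e eiy uy ui.
by rewrite eq_hom ltnn.
Qed.
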